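(* For every $h\in\widehat{\operatorname{PC}^{\bowtie}}$ and every order-preserving homeomorphism $\phi$ of $[0,1[$, one has $\varepsilon(h\phi)=\varepsilon(h)=\varepsilon(\phi h)$.
   Context: $X=[0,1[$; $\widehat{\operatorname{PC}^{\bowtie}}$ is the group of bijections $X\to X$ continuous outside a finite subset, containing the group ${\mathfrak S}_{\mathrm{fin}}$ of finitely supported permutations with classical signature $\operatorname{sgn}$ valued in $\mathbb{Z}/2\mathbb{Z}$. For $h\in\widehat{\operatorname{PC}^{\bowtie}}$, a partition associated with $h$ is a finite partition $\mathcal P=\{I_1,\dots,I_n\}$ of $X$ into intervals $I_j=[\alpha_j,b_j[$ such that $h$ is continuous on $I_j^\circ=]\alpha_j,b_j[$ for each $j$ (so $h$ is strictly monotone there and $h(I_j^\circ)$ is an open interval). Let $\beta_j$ be the left endpoint of $h(I_j^\circ)$; $\{h(\alpha_j)\}=\{\beta_j\}$, and $\sigma_{(h,\mathcal P)}\in{\mathfrak S}_{\mathrm{fin}}$ sends $h(\alpha_j)$ to $\beta_j$ for each $j$ and fixes all other points. $R(h,\mathcal P)$ is the number of $j$ with $h$ decreasing on $I_j^\circ$, and $\varepsilon(h,\mathcal P)=R(h,\mathcal P)+\operatorname{sgn}(\sigma_{(h,\mathcal P)})\bmod 2$. There is a unique associated partition $\mathcal P^{\min}_h$ with the fewest intervals, every associated partition refines it, and $\varepsilon(h):=\varepsilon(h,\mathcal P^{\min}_h)$. *)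

From Stdlib Require Import Reals Lra List ClassicalEpsilon.
Import ListNotations.
Open Scope R_scope.

Definition X (x : R) : Prop := 0 <= x < 1.

Definition cont_within (D : R -> Prop) (f : R -> R) (x : R) : Prop :=
  forall eps, 0 < eps -> exists delta, 0 < delta /\
    forall y, D y -> Rabs (y - x) < delta -> Rabs (f y - f x) < eps.

Definition bij_X (f : R -> R) : Prop :=
  (forall x, X x -> X (f x)) /\
  (forall y, X y -> exists x, X x /\ f x = y /\ forall x', X x' -> f x' = y -> x' = x).

Definition in_PC (h : R -> R) : Prop :=
  bij_X h /\
  exists F : list R, forall x, X x -> ~ In x F -> cont_within X h x.

Definition order_homeo (phi : R -> R) : Prop :=
  bij_X phi /\
  (forall x y, X x -> X y -> x < y -> phi x < phi y) /\
  (forall x, X x -> cont_within X phi x) /\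
  exists psi : R -> R,
    (forall x, X x -> X (psi x)) /\
    (forall x, X x -> psi (phi x) = x) /\
    (forall y, X y -> phi (psi y) = y) /\
    (forall y, X y -> cont_within X psi y).

(** Finite partitions of X into intervals [c_j, c_{j+1}[ are encoded by the
    strictly increasing list of endpoints c = [c_0; ...; c_n] with c_0 = 0,
    c_n = 1 (n >= 1 intervals). *)
Fixpoint strictly_incr (c : list R) : Prop :=
  match c with
  | x :: ((y :: _) as t) => x < y /\ strictly_incr t
  | _ => True
  end.

Definition is_partition (c : list R) : Prop :=
  (2 <= length c)%nat /\ strictly_incr c /\
  nth 0 c 0 = 0 /\ nth (length c - 1) c 0 = 1.

Definition nintervals (c : list R) : nat := (length c - 1)%nat.
Definition lo (c : list R) (j : nat) : R := nth j c 0.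
Definition hi (c : list R) (j : nat) : R := nth (S j) c 0.
Definition open_int (c : list R) (j : nat) (x : R) : Prop := lo c j < x < hi c j.

Definition associated (h : R -> R) (c : list R) : Prop :=
  is_partition c /\
  forall j, (j < nintervals c)%nat ->
    forall x, open_int c j x -> cont_within (open_int c j) h x.

Definition decr_on (h : R -> R) (c : list R) (j : nat) : Prop :=
  forall x y, open_int c j x -> open_int c j y -> x < y -> h y < h x.

Definition is_inf_image (h : R -> R) (c : list R) (j : nat) (beta : R) : Prop :=
  (forall x, open_int c j x -> beta <= h x) /\
  (forall b, (forall x, open_int c j x -> b <= h x) -> b <= beta).

Definition beta (h : R -> R) (c : list R) (j : nat) : R :=
  epsilon (inhabits 0) (is_inf_image h c j).

Definition bcl (P : Prop) : bool :=
  if excluded_middle_informative P then true else false.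

Definition count_nat (n : nat) (P : nat -> Prop) : nat :=
  length (filter (fun j => bcl (P j)) (seq 0 n)).

Definition Rdec (h : R -> R) (c : list R) : nat :=
  count_nat (nintervals c) (decr_on h c).

(** sigma_(h,P) sends h(alpha_j) to beta_j and fixes every other point.
    Its signature is the parity of its number of inversions w.r.t. the order
    of R:  #{ (x,y) : x < y, sigma x > sigma y }, where it suffices to range
    over the finite support {h(alpha_j)}. *)
Definition inversions_sigma (h : R -> R) (c : list R) : nat :=
  let n := nintervals c in
  length (filter (fun p => bcl (h (lo c (fst p)) < h (lo c (snd p)) /\
                                beta h c (snd p) < beta h c (fst p)))
            (list_prod (seq 0 n) (seq 0 n))).

(** epsilon(h,P) in Z/2Z (represented by 0 or 1) *)
Definition eps_part (h : R -> R) (c : list R) : nat :=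
  ((Rdec h c + inversions_sigma h c) mod 2)%nat.

Definition minimal_associated (h : R -> R) (c : list R) : Prop :=
  associated h c /\ forall c', associated h c' -> (length c <= length c')%nat.

Definition eps (h : R -> R) : nat :=
  epsilon (inhabits 0%nat)
    (fun e => exists c, minimal_associated h c /\ eps_part h c = e).

(* Precomposing h with an order-preserving homeomorphism phi moves every associated
   partition by phi^-1 (endpoints c_i become phi^-1(c_i), the endpoint 1 stays):
   the number of intervals, the intervals on which h is decreasing, the values
   h(alpha_j) and the infima beta_j are all unchanged.  Postcomposing keeps the
   partitions, and since phi is increasing and continuous it commutes with taking
   the infimum of h(I_j°), so again monotonicity and the inversions of sigma are
   unchanged.  In both cases associated partitions correspond with equal length,
   hence minimal ones correspond.  The reverse correspondences come from the same
   argument applied to phi^-1, because everything involved only depends on the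
   values of h on X. *)
From Stdlib Require Import Reals Lra Lia List ClassicalEpsilon FunctionalExtensionality PropExtensionality.
Open Scope R_scope.

Lemma strictly_incr_nth c i :
  strictly_incr c -> (S i < length c)%nat -> nth i c 0 < nth (S i) c 0.
Proof.
  revert i; induction c as [|a [|b t] IH]; intros i Hs Hl; simpl in Hl; try lia.
  destruct Hs as [Hab Ht]; destruct i as [|i]; [exact Hab|].
  apply (IH i Ht); simpl; lia.
Qed.

Lemma strictly_incr_nth_le c i k :
  strictly_incr c -> (i <= k)%nat -> (k < length c)%nat -> nth i c 0 <= nth k c 0.
Proof.
  intros Hs; induction k as [|k IH]; intros Hik Hk.
  - replace i with 0%nat by lia; lra.
  - destruct (Nat.eq_dec i (S k)) as [->|]; [lra|].
    apply Rle_trans with (nth k c 0); [apply IH; lia|].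
    left; apply strictly_incr_nth; auto.
Qed.

Lemma strictly_incr_map f c :
  (forall a b, In a c -> In b c -> a < b -> f a < f b) ->
  strictly_incr c -> strictly_incr (map f c).
Proof.
  induction c as [|a [|b t] IH]; intros Hf Hs; simpl; auto.
  destruct Hs as [Hab Ht]; split.
  - apply Hf; simpl; auto.
  - apply IH; auto. intros x y Hx Hy; apply Hf; simpl in *; tauto.
Qed.

Lemma nth_map_0 f c j : f 0 = 0 -> nth j (map f c) 0 = f (nth j c 0).
Proof. intros H0; rewrite <- H0 at 1; apply map_nth. Qed.

Lemma partition_bounds c x : is_partition c -> In x c -> 0 <= x <= 1.
Proof.
  intros [Hl [Hs [H0 H1]]] Hx.
  apply In_nth with (d := 0) in Hx as [j [Hj <-]]; split.
  - rewrite <- H0 at 1; apply strictly_incr_nth_le; auto; lia.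
  - rewrite <- H1 at 1; apply strictly_incr_nth_le; auto; lia.
Qed.

Lemma partition_interval c j :
  is_partition c -> (j < nintervals c)%nat -> 0 <= lo c j /\ lo c j < hi c j /\ hi c j <= 1.
Proof.
  intros Hp Hj; unfold nintervals, lo, hi in *.
  assert (Hlo := partition_bounds c _ Hp (nth_In c 0 (ltac:(lia) : (j < length c)%nat))).
  assert (Hhi := partition_bounds c _ Hp (nth_In c 0 (ltac:(lia) : (S j < length c)%nat))).
  assert (Hlt := strictly_incr_nth c j (proj1 (proj2 Hp)) ltac:(lia)).
  lra.
Qed.

Lemma open_int_X c j x : is_partition c -> (j < nintervals c)%nat -> open_int c j x -> X x.
Proof. intros Hp Hj Hx; pose proof (partition_interval c j Hp Hj); unfold open_int, X in *; lra. Qed.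

Lemma lo_X c j : is_partition c -> (j < nintervals c)%nat -> X (lo c j).
Proof. intros Hp Hj; pose proof (partition_interval c j Hp Hj); unfold X; lra. Qed.

Lemma cont_within_sub (D E : R -> Prop) f x :
  (forall y, E y -> D y) -> cont_within D f x -> cont_within E f x.
Proof.
  intros HED Hf eps Heps; destruct (Hf eps Heps) as [d [Hd Hc]]; exists d; auto.
Qed.

Lemma cont_within_ext (E : R -> Prop) f g x :
  (forall y, E y -> f y = g y) -> E x -> cont_within E f x -> cont_within E g x.
Proof.
  intros Hfg Ex Hf eps Heps; destruct (Hf eps Heps) as [d [Hd Hc]]; exists d; split; auto.
  intros y Ey Hy; rewrite <- !Hfg; auto.
Qed.

Lemma cont_within_comp (D E : R -> Prop) f g x :
  cont_within D f (g x) -> cont_within E g x -> (forall y, E y -> D (g y)) ->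
  cont_within E (fun y => f (g y)) x.
Proof.
  intros Hf Hg HED eps Heps; destruct (Hf eps Heps) as [d1 [Hd1 H1]].
  destruct (Hg d1 Hd1) as [d2 [Hd2 H2]]; exists d2; auto.
Qed.

Lemma bcl_iff (P Q : Prop) : (P <-> Q) -> bcl P = bcl Q.
Proof.
  intros H; unfold bcl.
  destruct (excluded_middle_informative P), (excluded_middle_informative Q); tauto.
Qed.

Lemma is_inf_image_unique h c j a b :
  is_inf_image h c j a -> is_inf_image h c j b -> a = b.
Proof. intros [A1 A2] [B1 B2]; apply Rle_antisym; auto. Qed.

Lemma is_inf_image_exists h c j :
  is_partition c -> (j < nintervals c)%nat -> (forall x, X x -> X (h x)) ->
  exists b, is_inf_image h c j b /\ X b.
Proof.
  intros Hp Hj HX.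
  pose (m := (lo c j + hi c j) / 2).
  assert (Hm : open_int c j m) by (pose proof (partition_interval c j Hp Hj); unfold open_int, m; lra).
  assert (Hpos : forall x, open_int c j x -> 0 <= h x).
  { intros x Hx; pose proof (HX x (open_int_X c j x Hp Hj Hx)); unfold X in *; lra. }
  pose (E := fun b => forall x, open_int c j x -> b <= h x).
  destruct (completeness E) as [s [Hub Hlub]].
  - exists (h m); intros b Hb; apply Hb, Hm.
  - exists 0; exact Hpos.
  - assert (s <= h m) by (apply Hlub; intros b Hb; apply Hb, Hm).
    assert (0 <= s) by exact (Hub 0 Hpos).
    pose proof (HX m (open_int_X c j m Hp Hj Hm)); unfold X in *.
    exists s; repeat split; try lra.
    + intros x Hx; apply Hlub; intros b Hb; apply Hb, Hx.
    + intros b Hb; exact (Hub b Hb).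
Qed.

Lemma beta_spec h c j :
  is_partition c -> (j < nintervals c)%nat -> (forall x, X x -> X (h x)) ->
  is_inf_image h c j (beta h c j) /\ X (beta h c j).
Proof.
  intros Hp Hj HX; destruct (is_inf_image_exists h c j Hp Hj HX) as [b [Hb Xb]].
  assert (Hbeta : is_inf_image h c j (beta h c j)) by (unfold beta; apply epsilon_spec; eauto).
  rewrite (is_inf_image_unique h c j _ b); auto.
Qed.

Lemma beta_ext h c j g c' j' :
  (forall b, (forall x, open_int c j x -> b <= h x) <-> (forall y, open_int c' j' y -> b <= g y)) ->
  beta h c j = beta g c' j'.
Proof.
  intros Hlb; unfold beta, is_inf_image; f_equal.
  apply functional_extensionality; intro b; apply propositional_extensionality.
  split; intros [H1 H2]; split; try apply Hlb; auto; intros b' Hb'; apply H2, Hlb, Hb'.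
Qed.

Lemma is_inf_image_comp_l f h c j b :
  is_partition c -> (j < nintervals c)%nat -> (forall x, X x -> X (h x)) ->
  (forall x y, X x -> X y -> x <= y -> f x <= f y) -> X b -> cont_within X f b ->
  is_inf_image h c j b -> is_inf_image (fun x => f (h x)) c j (f b).
Proof.
  intros Hp Hj HX Hf Xb Hc [Hlow Hgreat]; split.
  - intros x Hx; apply Hf; auto; apply HX, (open_int_X c j x Hp Hj Hx).
  - intros b' Hb'; apply Rnot_lt_le; intro Hlt.
    destruct (Hc (b' - f b) ltac:(lra)) as [d [Hd Hclose]].
    destruct (classic (exists x, open_int c j x /\ h x < b + d)) as [[x [Hx Hxd]]|Hnone].
    + pose proof (Hlow x Hx); pose proof (Hb' x Hx).
      assert (Hfx := Hclose (h x) (HX x (open_int_X c j x Hp Hj Hx)) ltac:(rewrite Rabs_right; lra)).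
      apply Rabs_def2 in Hfx; lra.
    + enough (b + d <= b) by lra.
      apply Hgreat; intros x Hx; apply Rnot_lt_le; intro; apply Hnone; eauto.
Qed.

Lemma Rdec_ext h c g c' :
  nintervals c' = nintervals c ->
  (forall j, (j < nintervals c)%nat -> (decr_on h c j <-> decr_on g c' j)) ->
  Rdec h c = Rdec g c'.
Proof.
  intros Hn Hdecr; unfold Rdec, count_nat; rewrite Hn; f_equal.
  apply filter_ext_in; intros j Hj; apply in_seq in Hj.
  apply bcl_iff, Hdecr; lia.
Qed.

Lemma inversions_sigma_ext h c g c' :
  nintervals c' = nintervals c ->
  (forall a b, (a < nintervals c)%nat -> (b < nintervals c)%nat ->
    (h (lo c a) < h (lo c b) /\ beta h c b < beta h c a <->
     g (lo c' a) < g (lo c' b) /\ beta g c' b < beta g c' a)) ->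
  inversions_sigma h c = inversions_sigma g c'.
Proof.
  intros Hn Hinv; unfold inversions_sigma; rewrite Hn; f_equal.
  apply filter_ext_in; intros [a b] Hab.
  apply in_prod_iff in Hab as [Ha Hb]; apply in_seq in Ha, Hb.
  apply bcl_iff, Hinv; simpl; lia.
Qed.

Lemma associated_ext_X h g c :
  (forall x, X x -> h x = g x) -> associated h c -> associated g c.
Proof.
  intros Hhg [Hp Hc]; split; auto; intros j Hj x Hx.
  apply (cont_within_ext _ h); auto.
  intros y Hy; apply Hhg, (open_int_X c j y Hp Hj Hy).
Qed.

Lemma eps_part_ext_X h g c :
  is_partition c -> (forall x, X x -> h x = g x) -> eps_part h c = eps_part g c.
Proof.
  intros Hp Hhg.
  assert (Hopen : forall j x, (j < nintervals c)%nat -> open_int c j x -> h x = g x)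
    by (intros j x Hj Hx; apply Hhg, (open_int_X c j x Hp Hj Hx)).
  assert (Hbeta : forall j, (j < nintervals c)%nat -> beta h c j = beta g c j).
  { intros j Hj; apply beta_ext; intro b.
    split; intros Hb x Hx; [rewrite <- (Hopen j x) | rewrite (Hopen j x)]; auto. }
  unfold eps_part; f_equal; f_equal.
  - apply Rdec_ext; auto; intros j Hj; unfold decr_on.
    split; intros Hd x y Hx Hy Hxy.
    + rewrite <- (Hopen j x), <- (Hopen j y); auto.
    + rewrite (Hopen j x), (Hopen j y); auto.
  - apply inversions_sigma_ext; auto; intros a b Ha Hb.
    rewrite !Hhg, Hbeta, (Hbeta a) by (auto; apply lo_X; auto); tauto.
Qed.

Definition transports (h g : R -> R) (T : list R -> list R) : Prop :=
  forall c, associated h c ->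
    associated g (T c) /\ length (T c) = length c /\ eps_part g (T c) = eps_part h c.

Lemma transports_ext_X h g g' T :
  (forall x, X x -> g x = g' x) -> transports h g T -> transports h g' T.
Proof.
  intros Hg HT c Hc; destruct (HT c Hc) as [Ha [Hl He]]; split; [|split]; auto.
  - apply (associated_ext_X g); auto.
  - rewrite <- He; symmetry; apply eps_part_ext_X; auto; apply Ha.
Qed.

Lemma minimal_associated_transport h g T U c :
  transports h g T -> transports g h U -> minimal_associated h c -> minimal_associated g (T c).
Proof.
  intros HT HU [Hc Hmin]; destruct (HT c Hc) as [HTc [HTl _]]; split; auto.
  intros c' Hc'; destruct (HU c' Hc') as [HUc [HUl _]].
  rewrite HTl, <- HUl; auto.
Qed.

Lemma eps_transport h g T U : transports h g T -> transports g h U -> eps h = eps g.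
Proof.
  intros HT HU; unfold eps; f_equal.
  apply functional_extensionality; intro e; apply propositional_extensionality.
  split; intros [c [Hm He]].
  - exists (T c); split; [apply (minimal_associated_transport h g T U); auto|].
    rewrite <- He; apply (HT c), Hm.
  - exists (U c); split; [apply (minimal_associated_transport g h U T); auto|].
    rewrite <- He; apply (HU c), Hm.
Qed.

Record inverse_homeo (phi psi : R -> R) : Prop := {
  ih_maps_X : forall x, X x -> X (phi x);
  ih_inv_maps_X : forall x, X x -> X (psi x);
  ih_left_inv : forall x, X x -> psi (phi x) = x;
  ih_right_inv : forall y, X y -> phi (psi y) = y;
  ih_incr : forall x y, X x -> X y -> x < y -> phi x < phi y;
  ih_inv_incr : forall x y, X x -> X y -> x < y -> psi x < psi y;
  ih_cont : forall x, X x -> cont_within X phi x;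
  ih_inv_cont : forall x, X x -> cont_within X psi x }.

Lemma inverse_homeo_sym phi psi : inverse_homeo phi psi -> inverse_homeo psi phi.
Proof. intros []; constructor; auto. Qed.

Lemma order_homeo_inverse phi : order_homeo phi -> exists psi, inverse_homeo phi psi.
Proof.
  intros [[HX _] [Hinc [Hc [psi [HXpsi [Hl [Hr Hcpsi]]]]]]].
  exists psi; constructor; auto.
  intros x y Hx Hy Hxy.
  destruct (Rtotal_order (psi x) (psi y)) as [|[E|E]]; auto.
  - apply (f_equal phi) in E; rewrite !Hr in E; auto; lra.
  - apply Hinc in E; auto; rewrite !Hr in E; auto; lra.
Qed.

(* Partition endpoints are transported by psi; the endpoint 1 lies outside X and is kept fixed. *)
Definition extend1 (f : R -> R) (x : R) : R := if Rlt_dec x 1 then f x else x.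

Lemma extend1_lt f x : x < 1 -> extend1 f x = f x.
Proof. intros; unfold extend1; destruct (Rlt_dec x 1); [auto | lra]. Qed.

Lemma extend1_1 f : extend1 f 1 = 1.
Proof. unfold extend1; destruct (Rlt_dec 1 1); lra. Qed.

Lemma nintervals_map f c : nintervals (map f c) = nintervals c.
Proof. unfold nintervals; rewrite length_map; auto. Qed.

Section InverseHomeo.

Variables phi psi : R -> R.
Hypothesis Hphi : inverse_homeo phi psi.

Lemma inverse_homeo_lt_iff x y : X x -> X y -> (x < y <-> phi x < phi y).
Proof.
  intros Hx Hy; split; [apply (ih_incr _ _ Hphi); auto|].
  intro Hlt; destruct (Rtotal_order x y) as [|[->|E]]; [auto|lra|].
  apply (ih_incr _ _ Hphi) in E; auto; lra.
Qed.

Lemma inverse_homeo_inv_lt_iff x y : X x -> X y -> (psi x < y <-> x < phi y).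
Proof.
  intros Hx Hy; rewrite (inverse_homeo_lt_iff (psi x) y), (ih_right_inv _ _ Hphi);
    [reflexivity | auto | apply (ih_inv_maps_X _ _ Hphi) | ]; auto.
Qed.

Lemma inverse_homeo_0 : phi 0 = 0.
Proof.
  assert (X0 : X 0) by (unfold X; lra).
  pose proof (ih_inv_maps_X _ _ Hphi 0 X0) as Xpsi0.
  destruct (Req_dec (psi 0) 0) as [E|E].
  - rewrite <- E at 1; apply (ih_right_inv _ _ Hphi), X0.
  - assert (Hlt : 0 < psi 0) by (unfold X in Xpsi0; lra).
    apply (ih_incr _ _ Hphi) in Hlt; auto.
    rewrite (ih_right_inv _ _ Hphi) in Hlt; auto.
    pose proof (ih_maps_X _ _ Hphi 0 X0); unfold X in *; lra.
Qed.

End InverseHomeo.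

Section Composition.

Variables phi psi : R -> R.
Hypothesis Hphi : inverse_homeo phi psi.

Lemma extend1_inv_0 : extend1 psi 0 = 0.
Proof.
  rewrite extend1_lt by lra; apply (inverse_homeo_0 psi phi), inverse_homeo_sym, Hphi.
Qed.

Lemma extend1_inv_incr a b : 0 <= a -> a < b -> b <= 1 -> extend1 psi a < extend1 psi b.
Proof.
  intros Ha Hab Hb; assert (Xa : X a) by (unfold X; lra).
  rewrite (extend1_lt psi a) by lra.
  destruct (Rlt_dec b 1) as [Hb1|Hb1].
  - rewrite extend1_lt by lra; apply (ih_inv_incr _ _ Hphi); auto; unfold X; lra.
  - replace b with 1 by lra; rewrite extend1_1.
    apply (ih_inv_maps_X _ _ Hphi), Xa.
Qed.

Lemma partition_map_extend1 c : is_partition c -> is_partition (map (extend1 psi) c).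
Proof.
  intros Hp; pose proof Hp as [Hl [Hs [H0 H1]]].
  pose proof extend1_inv_0 as E0.
  split; [|split; [|split]].
  - rewrite length_map; auto.
  - apply strictly_incr_map; auto; intros a b Ha Hb Hab.
    apply extend1_inv_incr; auto; [apply (partition_bounds c a) | apply (partition_bounds c b)]; auto.
  - rewrite nth_map_0, H0; auto.
  - rewrite length_map, nth_map_0, H1; auto; apply extend1_1.
Qed.

Lemma lo_map_extend1 c j :
  is_partition c -> (j < nintervals c)%nat -> lo (map (extend1 psi) c) j = psi (lo c j).
Proof.
  intros Hp Hj; pose proof (lo_X c j Hp Hj) as Xlo; unfold lo in *.
  rewrite nth_map_0 by apply extend1_inv_0; apply extend1_lt; unfold X in Xlo; lra.
Qed.

Lemma open_int_map_extend1 c j y :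
  is_partition c -> (j < nintervals c)%nat -> X y ->
  (open_int (map (extend1 psi) c) j y <-> open_int c j (phi y)).
Proof.
  intros Hp Hj Xy; pose proof (partition_interval c j Hp Hj) as Hb.
  unfold open_int; rewrite lo_map_extend1 by auto.
  rewrite (inverse_homeo_inv_lt_iff phi psi Hphi) by (auto; apply lo_X; auto).
  unfold hi in *; rewrite nth_map_0 by apply extend1_inv_0.
  destruct (Rlt_dec (nth (S j) c 0) 1) as [Hlt|Hge].
  - rewrite extend1_lt, (inverse_homeo_lt_iff phi psi Hphi y), (ih_right_inv _ _ Hphi)
      by (auto; try apply (ih_inv_maps_X _ _ Hphi); unfold X; lra).
    reflexivity.
  - replace (nth (S j) c 0) with 1 by lra; rewrite extend1_1.
    pose proof (ih_maps_X _ _ Hphi y Xy); unfold X in *; split; intros [? ?]; split; lra.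
Qed.

Lemma open_int_map_extend1_inv c j x :
  is_partition c -> (j < nintervals c)%nat -> open_int c j x ->
  open_int (map (extend1 psi) c) j (psi x).
Proof.
  intros Hp Hj Hx; pose proof (open_int_X c j x Hp Hj Hx) as Xx.
  apply open_int_map_extend1; auto; [apply (ih_inv_maps_X _ _ Hphi), Xx|].
  rewrite (ih_right_inv _ _ Hphi); auto.
Qed.

Lemma open_int_map_extend1_X c j y :
  is_partition c -> (j < nintervals c)%nat -> open_int (map (extend1 psi) c) j y -> X y.
Proof.
  intros Hp Hj; apply (open_int_X _ j _ (partition_map_extend1 c Hp)).
  rewrite nintervals_map; exact Hj.
Qed.

Variable h : R -> R.

Lemma associated_comp_r c :
  associated h c -> associated (fun x => h (phi x)) (map (extend1 psi) c).
Proof.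
  intros [Hp Hc]; split; [apply partition_map_extend1, Hp|].
  rewrite nintervals_map; intros j Hj y Hy.
  assert (XI : forall z, open_int (map (extend1 psi) c) j z -> X z)
    by (intros z; apply open_int_map_extend1_X; auto).
  apply (cont_within_comp (open_int c j)).
  - apply Hc; auto; apply open_int_map_extend1; auto.
  - apply (cont_within_sub X); auto; apply (ih_cont _ _ Hphi); auto.
  - intros z Hz; apply open_int_map_extend1; auto.
Qed.

Lemma beta_comp_r c j :
  is_partition c -> (j < nintervals c)%nat ->
  beta (fun x => h (phi x)) (map (extend1 psi) c) j = beta h c j.
Proof.
  intros Hp Hj; symmetry; apply beta_ext; intro b; split; intros Hb z Hz.
  - apply Hb, open_int_map_extend1; eauto using open_int_map_extend1_X.
  - rewrite <- (ih_right_inv _ _ Hphi z) by (apply (open_int_X c j); auto).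
    apply Hb, open_int_map_extend1_inv; auto.
Qed.

Lemma decr_on_comp_r c j :
  is_partition c -> (j < nintervals c)%nat ->
  (decr_on h c j <-> decr_on (fun x => h (phi x)) (map (extend1 psi) c) j).
Proof.
  intros Hp Hj; unfold decr_on; split; intros Hd x y Hx Hy Hxy.
  - pose proof (open_int_map_extend1_X c j x Hp Hj Hx).
    pose proof (open_int_map_extend1_X c j y Hp Hj Hy).
    apply Hd; try apply open_int_map_extend1; auto.
    apply (ih_incr _ _ Hphi); auto.
  - pose proof (open_int_X c j x Hp Hj Hx); pose proof (open_int_X c j y Hp Hj Hy).
    rewrite <- (ih_right_inv _ _ Hphi x), <- (ih_right_inv _ _ Hphi y) by auto.
    apply Hd; try apply open_int_map_extend1_inv; auto.
    apply (ih_inv_incr _ _ Hphi); auto.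
Qed.

Lemma eps_part_comp_r c :
  is_partition c -> eps_part (fun x => h (phi x)) (map (extend1 psi) c) = eps_part h c.
Proof.
  intros Hp; symmetry; unfold eps_part; f_equal; f_equal.
  - apply Rdec_ext; [apply nintervals_map|]; intros j Hj.
    apply decr_on_comp_r; auto.
  - apply inversions_sigma_ext; [apply nintervals_map|]; intros a b Ha Hb.
    rewrite !lo_map_extend1, !(ih_right_inv _ _ Hphi), !beta_comp_r
      by (auto; apply lo_X; auto).
    reflexivity.
Qed.

Lemma transports_comp_r : transports h (fun x => h (phi x)) (map (extend1 psi)).
Proof.
  intros c Hc; split; [|split].
  - apply associated_comp_r, Hc.
  - apply length_map.
  - apply eps_part_comp_r, Hc.
Qed.

Hypothesis h_maps_X : forall x, X x -> X (h x).

Lemma associated_comp_l c : associated h c -> associated (fun x => phi (h x)) c.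
Proof.
  intros [Hp Hc]; split; auto; intros j Hj x Hx.
  apply (cont_within_comp X); auto.
  - apply (ih_cont _ _ Hphi), h_maps_X, (open_int_X c j x Hp Hj Hx).
  - intros y Hy; apply h_maps_X, (open_int_X c j y Hp Hj Hy).
Qed.

Lemma beta_comp_l c j :
  is_partition c -> (j < nintervals c)%nat ->
  beta (fun x => phi (h x)) c j = phi (beta h c j).
Proof.
  intros Hp Hj; destruct (beta_spec h c j Hp Hj h_maps_X) as [Hinf Xb].
  apply (is_inf_image_unique (fun x => phi (h x)) c j).
  - apply beta_spec; auto; intros x Hx; apply (ih_maps_X _ _ Hphi), h_maps_X, Hx.
  - apply is_inf_image_comp_l; auto; [|apply (ih_cont _ _ Hphi), Xb].
    intros x y Hx Hy [Hlt | ->]; [left; apply (ih_incr _ _ Hphi); auto | right; auto].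
Qed.

Lemma eps_part_comp_l c : is_partition c -> eps_part (fun x => phi (h x)) c = eps_part h c.
Proof.
  intros Hp.
  assert (Xh : forall j x, (j < nintervals c)%nat -> open_int c j x -> X (h x))
    by (intros j x Hj Hx; apply h_maps_X, (open_int_X c j x Hp Hj Hx)).
  symmetry; unfold eps_part; f_equal; f_equal.
  - apply Rdec_ext; auto; intros j Hj; unfold decr_on.
    split; intros Hd x y Hx Hy Hxy.
    + rewrite <- (inverse_homeo_lt_iff phi psi Hphi); eauto.
    + rewrite (inverse_homeo_lt_iff phi psi Hphi); eauto.
  - apply inversions_sigma_ext; auto; intros a b Ha Hb.
    rewrite !beta_comp_l by auto.
    rewrite <- !(inverse_homeo_lt_iff phi psi Hphi) by (apply h_maps_X, lo_X || apply beta_spec; auto).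
    reflexivity.
Qed.

Lemma transports_comp_l : transports h (fun x => phi (h x)) (fun c => c).
Proof.
  intros c Hc; split; [|split]; auto.
  - apply associated_comp_l, Hc.
  - apply eps_part_comp_l, Hc.
Qed.

End Composition.

Lemma eps_comp_r h phi psi : inverse_homeo phi psi -> eps (fun x => h (phi x)) = eps h.
Proof.
  intros Hphi; symmetry.
  apply (eps_transport _ _ (map (extend1 psi)) (map (extend1 phi))).
  - apply transports_comp_r, Hphi.
  - apply (transports_ext_X _ (fun x => h (phi (psi x)))).
    + intros x Hx; rewrite (ih_right_inv _ _ Hphi); auto.
    + apply (transports_comp_r psi phi (inverse_homeo_sym _ _ Hphi) (fun x => h (phi x))).
Qed.

Lemma eps_comp_l h phi psi :
  inverse_homeo phi psi -> (forall x, X x -> X (h x)) -> eps (fun x => phi (h x)) = eps h.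
Proof.
  intros Hphi HX; symmetry.
  apply (eps_transport _ _ (fun c => c) (fun c => c)).
  - apply transports_comp_l with psi; auto.
  - apply (transports_ext_X _ (fun x => psi (phi (h x)))).
    + intros x Hx; rewrite (ih_left_inv _ _ Hphi); auto.
    + apply (transports_comp_l psi phi (inverse_homeo_sym _ _ Hphi) (fun x => phi (h x))).
      intros x Hx; apply (ih_maps_X _ _ Hphi), HX, Hx.
Qed.

Theorem lemma3p7 (h phi : R -> R) :
  in_PC h -> order_homeo phi ->
  eps (fun x => h (phi x)) = eps h /\ eps h = eps (fun x => phi (h x)).
Proof.
  intros [[HX _] _] Hphi; destruct (order_homeo_inverse phi Hphi) as [psi Hpsi]; split.
  - apply eps_comp_r with psi; auto.
  - symmetry; apply eps_comp_l with psi; auto.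
Qed.
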